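(* Let $G$ be a finite graph in which every vertex has degree at most $d$. Then $$\tfrac12 PW(G)\le BW(G)\le d\cdot PW(G).$$
   Context: Bubble width: a bubbling of $G$ is an ordering $b_1,\dots,b_N$ of all vertices of $G$. Set $S_i=\{b_1,\dots,b_i\}$, and let $z_i$ be the set of edges with exactly one endpoint in $S_i$. The width of the bubbling is $\max_i|z_i|$. $BW(G)$ is the minimum width over all bubblings of $G$. Path width: a path decomposition of $G$ is a path $T$ (a tree with all nodes of degree at most 2) together with a subset $\tilde t\subseteq V(G)$ assigned to each node $t$ of $T$, such that: (1) for each edge $(v,w)$ of $G$, some subset $\tilde t$ contains both $v$ and $w$; (2) if $v$ lies in $\tilde t_1$ and in $\tilde t_2$, then $v$ lies in every subset on the path between $t_1$ and $t_2$. The width of the decomposition is $\max_t|\tilde t|$ (the number of vertices in the largest subset, with no $-1$). $PW(G)$ is the minimum width over all path decompositions of $G$. *)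

From mathcomp Require Import all_boot fingroup perm.
From mathcomp Require Import boolp.
Set Implicit Arguments. Unset Strict Implicit. Unset Printing Implicit Defensive.

(* A finite simple graph: vertex type T (finType), adjacency e : rel T,
   assumed symmetric and irreflexive in the theorem. *)

Section Graph.
Variables (T : finType) (e : rel T).

(* number of edges with exactly one endpoint in S (each edge counted once,
   via the ordered pair (inside endpoint, outside endpoint)) *)
Definition cut_size (S : {set T}) : nat :=
  #|[set p : T * T | [&& e p.1 p.2, p.1 \in S & p.2 \notin S]]|.

(* a bubbling is an ordering b_1..b_N of all vertices: a seq that is a
   permutation of enum T; its width is max_i |z_i| with S_i = {b_1..b_i} *)
Definition is_bubbling (s : seq T) : Prop := perm_eq s (enum T).

Definition bubbling_width (s : seq T) : nat :=
  \max_(i < (size s).+1) cut_size [set x in take i s].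

(* BW(G): minimum width over all bubblings (every ordering is
   [seq p x | x <- enum T] for some permutation p of T) *)
Definition BW : nat :=
  \big[minn/bubbling_width (enum T)]_(p : {perm T})
     bubbling_width [seq p x | x <- enum T].

(* path decomposition: nodes of the path T listed in order, with bags *)
Definition is_path_decomposition (bags : seq {set T}) : Prop :=
  bags != [::] /\
  (forall v w, e v w -> exists2 i, i < size bags &
      (v \in nth set0 bags i) && (w \in nth set0 bags i)) /\
  (forall v i j k, i <= j -> j <= k -> k < size bags ->
      v \in nth set0 bags i -> v \in nth set0 bags k -> v \in nth set0 bags j).

Definition pd_width (bags : seq {set T}) : nat := \max_(B <- bags) #|B|.

Lemma PW_exists : exists n, `[< exists2 bags, is_path_decomposition bags &
                                  pd_width bags = n >].
Proof.
exists (pd_width [:: setT]); apply/asboolP; exists [:: setT] => //.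
split => //; split.
- by move=> v w _; exists 0 => //=; rewrite !in_setT.
- by move=> v [|i] [|j] [|k] //=; case: i.
Qed.

Definition PW : nat := ex_minn PW_exists.

End Graph.

Definition max_degree_le (T : finType) (e : rel T) (d : nat) : Prop :=
  forall v : T, #|[set w | e v w]| <= d.

(* A bubbling of width w gives a path decomposition whose j-th bag is b_j together with
   the vertices of S_j that have a neighbour outside S_j.  Each such vertex is the inner
   endpoint of an edge of z_j, so bags have at most 1 + w <= 2w vertices; w = 0 only
   when G has no edges, and then PW = 0.
   Conversely, order the vertices by the first bag of a path decomposition containing
   them.  If S is an initial segment of this order, let t be the largest first-bag index
   of a vertex of S with a neighbour outside S.  Any such vertex u lies in its first bag
   and in a bag covering an edge leaving S; the latter comes no earlier than t, since
   the outer endpoint is first seen after every vertex of S.  By contiguity u lies in bag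
   t, so at most PW vertices of S meet z_i, each on at most d of its edges. *)
From mathcomp Require Import all_boot fingroup perm.
From mathcomp Require Import order boolp.
Set Implicit Arguments. Unset Strict Implicit.

Section Graph.
Variables (T : finType) (e : rel T).

Definition boundary (S : {set T}) : {set T} :=
  [set u in S | [exists w, e u w && (w \notin S)]].

Lemma card_boundary_le_cut_size S : #|boundary S| <= cut_size e S.
Proof.
apply: leq_trans (leq_imset_card fst _); apply: subset_leq_card.
apply/subsetP => u /setIdP[uS /existsP[w /andP[euw wS]]].
by apply/imsetP; exists (u, w); rewrite // inE /= euw uS.
Qed.

Lemma cut_size_le_boundary d S :
  max_degree_le e d -> cut_size e S <= #|boundary S| * d.
Proof.
move=> deg_d; rewrite /cut_size -sum1_card (partition_big fst (mem (boundary S))).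
  rewrite -sum_nat_const leq_sum // => u _; apply: leq_trans (deg_d u).
  rewrite sum1dep_card; apply: leq_trans (leq_imset_card (pair u) _).
  apply/subset_leq_card/subsetP => -[u' w]; rewrite !inE /=.
  by move=> /andP[/andP[euw _] /eqP <-]; apply/imsetP; exists w; rewrite ?inE.
case=> u w; rewrite inE /= => /and3P[euw uS wS].
by rewrite inE uS; apply/existsP; exists w; rewrite euw.
Qed.

Lemma PW_le_pd_width bags : is_path_decomposition e bags -> PW e <= pd_width bags.
Proof. by move=> pd; rewrite /PW; case: ex_minnP => m _; apply; apply/asboolP; exists bags. Qed.

Lemma PW_attained : exists2 bags, is_path_decomposition e bags & PW e = pd_width bags.
Proof. by rewrite /PW; case: ex_minnP => m /asboolP[bags pd <-] _; exists bags. Qed.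

Lemma PW_edgeless : (forall u v, ~~ e u v) -> PW e = 0.
Proof.
move=> no_edge; have pd : is_path_decomposition e [:: set0].
  split=> //; split=> [u v|v [|i] j k _ _ _] /=; rewrite ?nth_nil ?inE //.
  by rewrite (negbTE (no_edge u v)).
by apply/eqP; rewrite -leqn0 (leq_trans (PW_le_pd_width pd)) // /pd_width big_seq1 cards0.
Qed.

Lemma is_bubbling_perm (p : {perm T}) : is_bubbling [seq p x | x <- enum T].
Proof.
apply: uniq_perm; rewrite ?(map_inj_uniq (@perm_inj _ p)) ?enum_uniq // => x.
by rewrite mem_enum; apply/mapP; exists ((p^-1)%g x); rewrite ?mem_enum ?permKV.
Qed.

Lemma bubbling_perm s : is_bubbling s -> exists p : {perm T}, [seq p x | x <- enum T] = s.
Proof.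
move=> bub_s; have s_uniq : uniq s by rewrite (perm_uniq bub_s) enum_uniq.
have size_s : size s = size (enum T) by apply: perm_size.
have idx_lt x : index x (enum T) < size s by rewrite size_s index_mem mem_enum.
pose f x := nth x s (index x (enum T)).
have f_inj : injective f.
  move=> x y; rewrite /f (set_nth_default y) // => /eqP.
  rewrite nth_uniq // => /eqP /(congr1 (nth x (enum T))).
  by rewrite !nth_index ?mem_enum.
exists (perm f_inj); case: s => [|x0 s'] in bub_s s_uniq size_s idx_lt f f_inj *.
  by case: (enum T) size_s.
apply: (@eq_from_nth _ x0); rewrite size_map -?size_s // => i lt_i.
by rewrite (nth_map x0) -?size_s // permE /f index_uniq ?enum_uniq -?size_s // (set_nth_default x0).
Qed.

Lemma BW_le_bubbling_width s : is_bubbling s -> BW e <= bubbling_width e s.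
Proof.
by case/bubbling_perm => p <-; rewrite /BW -minEnat; apply: (@Order.TotalTheory.bigmin_le _ nat).
Qed.

Lemma BW_attained : exists2 s, is_bubbling s & BW e = bubbling_width e s.
Proof.
apply: (big_ind (fun m => exists2 s, is_bubbling s & m = bubbling_width e s)).
- by exists (enum T); first exact: perm_refl.
- by move=> m1 m2 ? ?; rewrite /minn; case: ifP.
- by move=> p _; exists [seq p x | x <- enum T]; first exact: is_bubbling_perm.
Qed.

Lemma cut_size_le_bubbling_width s i :
  i <= size s -> cut_size e [set x in take i s] <= bubbling_width e s.
Proof.
move=> le_i; exact: (@leq_bigmax _ (fun j : 'I_(size s).+1 => cut_size e [set x in take j s])
                             (Ordinal (le_i : i < (size s).+1))).
Qed.

Section BubblingBags.
Hypothesis e_sym : symmetric e.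
Variable s : seq T.
Hypothesis s_bubbling : is_bubbling s.

Let mem_s x : x \in s.
Proof. by rewrite (perm_mem s_bubbling) mem_enum. Qed.

(* [set x | index x s == j] is the singleton {b_j}, written so as to need no default element. *)
Definition bubbling_bag j := [set x | index x s == j] :|: boundary [set x in take j s].

Definition bubbling_bags := mkseq bubbling_bag (size s).

Lemma mem_bubbling_bag j x :
  (x \in bubbling_bag j) =
  (index x s <= j) && ((index x s == j) || [exists y, e x y && (j <= index y s)]).
Proof.
rewrite !inE in_take ?mem_s //.
have -> : [exists y, e x y && (y \notin [set z in take j s])] =
          [exists y, e x y && (j <= index y s)].
  by apply: eq_existsb => y; rewrite inE in_take ?mem_s // -leqNgt.
by case: ltngtP.
Qed.

Lemma card_bubbling_bag j : j <= size s -> #|bubbling_bag j| <= (bubbling_width e s).+1.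
Proof.
move=> le_j; apply: leq_trans (leq_card_setU _ _) _; rewrite -add1n leq_add //.
  apply/card_le1_eqP => x y; rewrite !inE => /eqP idx_x /eqP idx_y.
  by rewrite -(nth_index x (mem_s x)) idx_x -idx_y nth_index.
exact: leq_trans (card_boundary_le_cut_size _) (cut_size_le_bubbling_width le_j).
Qed.

Lemma bubbling_bags_path_decomposition :
  s != [::] -> is_path_decomposition e bubbling_bags.
Proof.
move=> s_nil; have idx_lt x : index x s < size s by rewrite index_mem.
have nth_bags j : j < size s -> nth set0 bubbling_bags j = bubbling_bag j.
  exact: nth_mkseq.
split; [by rewrite -size_eq0 size_mkseq size_eq0 | split].
  move=> u v; wlog le_uv : u v / index u s <= index v s => [wlog_le euv|euv].
    case: (leqP (index u s) (index v s)) => [|/ltnW] le; first exact: wlog_le.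
    rewrite e_sym in euv; have [i lt_i /andP[vi ui]] := wlog_le v u le euv.
    by exists i; rewrite ?ui ?vi.
  exists (index v s); rewrite ?size_mkseq // nth_bags // !mem_bubbling_bag !leqnn eqxx le_uv andbT.
  by apply/orP; right; apply/existsP; exists v; rewrite euv leqnn.
move=> x i j k le_ij le_jk; rewrite size_mkseq => lt_k.
have lt_j := leq_ltn_trans le_jk lt_k; have lt_i := leq_ltn_trans le_ij lt_j.
rewrite !nth_bags // !mem_bubbling_bag => /andP[le_xi _] /andP[_].
rewrite (leq_trans le_xi le_ij) /= => /orP[/eqP idx_x | /existsP[y /andP[exy le_ky]]].
  by rewrite eqn_leq (leq_trans le_xi le_ij) idx_x le_jk.
by apply/orP; right; apply/existsP; exists y; rewrite exy (leq_trans le_jk le_ky).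
Qed.

Lemma bubbling_width_gt0 u v : irreflexive e -> e u v -> 0 < bubbling_width e s.
Proof.
move=> e_irr; wlog lt_uv : u v / index u s < index v s => [wlog_lt euv|euv].
  case: (ltngtP (index u s) (index v s)) => [lt|lt|eq_idx].
  - exact: wlog_lt lt euv.
  - by apply: wlog_lt lt _; rewrite e_sym.
  - have eq_uv : u = v by rewrite -(nth_index u (mem_s u)) eq_idx nth_index.
    by move: euv; rewrite eq_uv e_irr.
have lt_u : index u s < size s by rewrite index_mem.
apply: leq_trans (cut_size_le_bubbling_width lt_u); apply/card_gt0P; exists (u, v).
by rewrite !inE /= euv !in_take ?mem_s // ltnSn -leqNgt lt_uv.
Qed.

Lemma PW_le_2bubbling_width : irreflexive e -> PW e <= 2 * bubbling_width e s.
Proof.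
move=> e_irr; have [/existsP[u /existsP[v euv]] | no_edge] := boolP [exists u, exists v, e u v]; last first.
  rewrite PW_edgeless // => u v; apply: contra no_edge => euv.
  by apply/existsP; exists u; apply/existsP; exists v.
have s_nil : s != [::] by apply/eqP => s_nil; move: (mem_s u); rewrite s_nil.
have w_gt0 := bubbling_width_gt0 e_irr euv.
apply: leq_trans (PW_le_pd_width (bubbling_bags_path_decomposition s_nil)) _.
apply/bigmax_leqP_seq => B /mapP[j]; rewrite mem_iota => /andP[_ lt_j] -> _.
apply: leq_trans (card_bubbling_bag (ltnW lt_j)) _.
by rewrite mul2n -addnn -addn1 leq_add2l.
Qed.

End BubblingBags.

Section FirstBagOrder.
Variable bags : seq {set T}.
Hypothesis bags_pd : is_path_decomposition e bags.

Definition first_bag v := find (fun B : {set T} => v \in B) bags.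

Lemma first_bag_le v k : v \in nth set0 bags k -> first_bag v <= k.
Proof. by move=> vk; rewrite leqNgt; apply/negP => /(before_find set0); rewrite vk. Qed.

Lemma mem_nth_first_bag v k :
  k < size bags -> v \in nth set0 bags k -> v \in nth set0 bags (first_bag v).
Proof.
by move=> lt_k vk; apply: (nth_find set0 (a := fun B => v \in B)); apply/(has_nthP set0); exists k.
Qed.

Lemma boundary_sub_bag (S : {set T}) u0 :
    (forall u w, u \in S -> w \notin S -> first_bag u <= first_bag w) ->
    u0 \in boundary S ->
  exists2 t, t < size bags & boundary S \subset nth set0 bags t.
Proof.
move=> S_closed u0B; have [_ [edge_bag contig]] := bags_pd.
have [u1 u1B t_eq] : {u1 | u1 \in boundary S &
    \max_(u in boundary S) first_bag u = first_bag u1}.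
  by apply: eq_bigmax_cond; apply/card_gt0P; exists u0.
set t := \max_(u in boundary S) first_bag u in t_eq.
have edge_bag_after u : u \in boundary S ->
    exists2 k, k < size bags & (u \in nth set0 bags k) && (t <= k).
  case/setIdP=> _ /existsP[w /andP[euw wS]].
  have [k lt_k /andP[uk wk]] := edge_bag u w euw.
  exists k; rewrite // uk t_eq (leq_trans (S_closed _ _ _ wS) (first_bag_le wk)) //.
  by case/setIdP: u1B.
have [k lt_k /andP[_ le_tk]] := edge_bag_after u0 u0B.
exists t; first exact: leq_ltn_trans le_tk lt_k.
apply/subsetP => u uB; have [{}k {}lt_k /andP[uk {}le_tk]] := edge_bag_after u uB.
apply: (contig u (first_bag u) t k) => //; last exact: mem_nth_first_bag uk.
exact: leq_bigmax_cond.
Qed.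

Lemma card_boundary_le_pd_width (S : {set T}) :
    (forall u w, u \in S -> w \notin S -> first_bag u <= first_bag w) ->
  #|boundary S| <= pd_width bags.
Proof.
move=> S_closed; have [-> | [u0 u0B]] := set_0Vmem (boundary S); first by rewrite cards0.
have [t lt_t sub_t] := boundary_sub_bag S_closed u0B.
exact: leq_trans (subset_leq_card sub_t) (leq_bigmax_seq _ (mem_nth set0 lt_t) _).
Qed.

Definition first_bag_order := sort (fun x y => first_bag x <= first_bag y) (enum T).

Lemma is_bubbling_first_bag_order : is_bubbling first_bag_order.
Proof. by rewrite /is_bubbling perm_sort. Qed.

Lemma first_bag_le_in_take i u w :
  u \in take i first_bag_order -> w \notin take i first_bag_order ->
  first_bag u <= first_bag w.
Proof.
move=> u_take w_take.
have w_drop : w \in drop i first_bag_order.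
  have := perm_mem is_bubbling_first_bag_order w; rewrite mem_enum.
  by rewrite -{1}(cat_take_drop i first_bag_order) mem_cat (negbTE w_take).
have : pairwise (fun x y => first_bag x <= first_bag y) first_bag_order.
  rewrite -sorted_pairwise; last by move=> ? ? ?; apply: leq_trans.
  by apply: sort_sorted => x y; apply: leq_total.
rewrite -{1}(cat_take_drop i first_bag_order) pairwise_cat => /and3P[/allrelP take_le_drop _ _].
exact: take_le_drop.
Qed.

Lemma bubbling_width_first_bag_order d :
  max_degree_le e d -> bubbling_width e first_bag_order <= d * pd_width bags.
Proof.
move=> deg_d; apply/bigmax_leqP => i _.
apply: leq_trans (cut_size_le_boundary _ deg_d) _; rewrite mulnC leq_mul2l.
by rewrite card_boundary_le_pd_width ?orbT // => u w; rewrite !inE; apply: first_bag_le_in_take.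
Qed.

End FirstBagOrder.

End Graph.

Theorem lemma2 (T : finType) (e : rel T) (d : nat) :
  symmetric e -> irreflexive e -> max_degree_le e d ->
  PW e <= 2 * BW e /\ BW e <= d * PW e.
Proof.
move=> e_sym e_irr deg_d; split.
  have [s s_bubbling ->] := BW_attained e.
  exact: PW_le_2bubbling_width.
have [bags bags_pd ->] := PW_attained e.
apply: leq_trans (BW_le_bubbling_width e (is_bubbling_first_bag_order bags)) _.
exact: bubbling_width_first_bag_order.
Qed.
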